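(* Let $\phi$ be one of the two numbers $\frac{-1\pm\sqrt5}{2}$. In $\mathbb{C}\mathbb{P}^2$ with homogeneous coordinates $[x:y:z]$ consider the lines $L_1: z=0$, $L_2: x=0$, $L_3: x-z=0$, $L_4: y=0$, $L_5: y-z=0$, $L_6: x-y=0$, $L_7: x+\phi y-z=0$, $L_8: \phi x-\phi y+z=0$, $L_9: -\phi x+(\phi-1)y=0$, $L_{10}: x-\phi z=0$, and $L^1_{11}: (\phi+2)x-(\phi+1)y+\phi z=0$, $L^1_{12}: (\phi-1)x-\phi y+(2\phi-1)z=0$, $L^1_{13}: (-2\phi+1)x+(-3\phi+2)y+(\phi-1)z=0$, $L^2_{11}: (\phi+2)x-(\phi+3)y+(\phi+2)z=0$, $L^2_{12}: -(\phi+1)x+(\phi-2)y+z=0$, $L^2_{13}: -x+(-\phi+2)y-(\phi+1)z=0$. Let $\mathcal{B}_1=\{L_1,\dots,L_{10},L^1_{11},L^1_{12},L^1_{13}\}$ and $\mathcal{B}_2=\{L_1,\dots,L_{10},L^2_{11},L^2_{12},L^2_{13}\}$. Then $\mathcal{B}_1$ and $\mathcal{B}_2$ form a (real) nonarithmetic pair defined over $\mathbb{Q}(\sqrt5)$.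
   Context: A line arrangement is a finite set of distinct lines in $\mathbb{C}\mathbb{P}^2$. Its combinatorics is the pair $(\mathcal{A},\mathrm{sing}(\mathcal{A}))$ where each singular point is identified with the set of lines of $\mathcal{A}$ through it. Two arrangements are lattice isomorphic if some bijection between their lines induces a bijection between their sets of singular points. The moduli space $\mathcal{M}(\mathcal{C})$ of a combinatorics $\mathcal{C}$ is the set of arrangements with combinatorics $\mathcal{C}$ modulo $\mathrm{PGL}_3(\mathbb{C})$. A pair of arrangements means two lattice isomorphic arrangements lying in different connected components of their common moduli space. The definition field $\mathbb{F}(\mathcal{A})$ is the number field generated by the coefficients of the lines of $\mathcal{A}$. A field automorphism $\sigma$ acts on a line $ax+by+cz=0$ by $\sigma(a)x+\sigma(b)y+\sigma(c)z=0$, and on an arrangement line by line. A pair $\mathcal{A}_1,\mathcal{A}_2$ is arithmetic if, for a number field $\mathbb{F}$ containing both definition fields, some $\sigma\in\mathrm{Gal}(\mathbb{F}/\mathbb{Q})$ satisfies $\sigma\cdot\mathcal{A}_1=\mathcal{A}_2$; it is nonarithmetic otherwise. *)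

From HB Require Import structures.
From mathcomp Require Import all_boot all_order all_algebra all_field.
From mathcomp Require Import complex reals.
Set Implicit Arguments. Unset Strict Implicit. Unset Printing Implicit Defensive.
Import Order.TTheory GRing.Theory Num.Theory.
Local Open Scope ring_scope.

Section LineArrangements.
Variable R : realType.
Local Notation C := R[i].

(* A line a x + b y + c z = 0 of CP^2 is given by its coefficient row (a,b,c);
   a point [x:y:z] by a nonzero row (x,y,z).  An (ordered) arrangement of n
   lines is a map 'I_n -> 'rV[C]_3. *)
Definition line_of (a b c : C) : 'rV[C]_3 := \row_(k < 3) nth 0 [:: a; b; c] k.

Definition on_line (l p : 'rV[C]_3) : bool := (l *m p^T) 0 0 == 0.

Definition same_line (u v : 'rV[C]_3) : Prop := exists k : C, k != 0 /\ v = k *: u.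

Definition is_arr n (A : 'I_n -> 'rV[C]_3) : Prop :=
  (forall i, A i != 0) /\ (forall i j, i != j -> ~ same_line (A i) (A j)).

Definition lines_through n (A : 'I_n -> 'rV[C]_3) (p : 'rV[C]_3) : {set 'I_n} :=
  [set i | on_line (A i) p].

(* S is (the set of lines through) a singular point of A *)
Definition sing n (A : 'I_n -> 'rV[C]_3) (S : {set 'I_n}) : Prop :=
  exists p : 'rV[C]_3, p != 0 /\ S = lines_through A p /\ (1 < #|S|)%N.

(* A and B are lattice isomorphic via the labelling i |-> i, i.e. they have the
   same (labelled) combinatorics *)
Definition same_comb n (A B : 'I_n -> 'rV[C]_3) : Prop :=
  forall S, sing A S <-> sing B S.

Definition realization n (Aref A : 'I_n -> 'rV[C]_3) : Prop :=
  is_arr A /\ same_comb Aref A.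

(* projective equivalence (action of PGL_3(C), and rescaling of each
   coefficient row, which does not change the line) *)
Definition proj_equiv n (A B : 'I_n -> 'rV[C]_3) : Prop :=
  exists g : 'M[C]_3, g \in unitmx /\ forall i, same_line (A i *m g) (B i).

(* Euclidean topology on the realisation space X (a subspace of (C^3)^n) *)
Definition rel_open n (X U : ('I_n -> 'rV[C]_3) -> Prop) : Prop :=
  (forall A, U A -> X A) /\
  forall A, U A -> exists e : C, 0 < e /\
    forall B, X B -> (forall i k, `|B i 0 k - A i 0 k| < e) -> U B.

Definition saturated n (X U : ('I_n -> 'rV[C]_3) -> Prop) : Prop :=
  forall A B, X A -> X B -> proj_equiv A B -> U A -> U B.

(* The moduli space M = X / proj_equiv carries the quotient topology: its
   subsets (resp. open subsets) correspond to saturated subsets (resp.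
   saturated relatively open subsets) of X.  [connected_in_moduli X S] says
   that the image of the saturated set S in M is connected. *)
Definition connected_in_moduli n (X S : ('I_n -> 'rV[C]_3) -> Prop) : Prop :=
  ~ exists U V : ('I_n -> 'rV[C]_3) -> Prop,
      [/\ rel_open X U /\ saturated X U, rel_open X V /\ saturated X V,
          (forall A, S A -> U A \/ V A),
          (forall A, S A -> U A -> V A -> False) &
          (exists A, S A /\ U A) /\ (exists A, S A /\ V A)].

Definition same_component n (X : ('I_n -> 'rV[C]_3) -> Prop)
    (A1 A2 : 'I_n -> 'rV[C]_3) : Prop :=
  exists S : ('I_n -> 'rV[C]_3) -> Prop,
    [/\ forall A, S A -> X A, saturated X S, connected_in_moduli X S,
        S A1 & S A2].

Definition is_pair n (A1 A2 : 'I_n -> 'rV[C]_3) : Prop :=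
  [/\ is_arr A1, is_arr A2, same_comb A1 A2 &
      ~ same_component (realization A1) A1 A2].

Definition same_arr n (A B : 'I_n -> 'rV[C]_3) : Prop :=
  (forall i, exists j, same_line (A i) (B j)) /\
  (forall j, exists i, same_line (A i) (B j)).

(* Arithmetic pair: for a number field F (a finite extension of Q, embedded in
   C by iota) containing the coefficients of both arrangements, some
   automorphism sigma of F maps A1 to A2 (acting on coefficients). *)
Definition arithmetic n (A1 A2 : 'I_n -> 'rV[C]_3) : Prop :=
  exists (F : fieldExtType rat) (iota : {rmorphism F -> C})
         (sigma : {rmorphism F -> F}) (A1' A2' : 'I_n -> 'rV[F]_3),
    [/\ bijective sigma,
        forall i, map_mx iota (A1' i) = A1 i,
        forall i, map_mx iota (A2' i) = A2 i &
        same_arr (fun i => map_mx (iota \o sigma) (A1' i)) A2].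

Definition nonarithmetic_pair n (A1 A2 : 'I_n -> 'rV[C]_3) : Prop :=
  is_pair A1 A2 /\ ~ arithmetic A1 A2.

Definition real_arr n (A : 'I_n -> 'rV[C]_3) : Prop :=
  forall i k, A i 0 k \is Num.real.

Definition sqrt5 : C := ((Num.sqrt (5 : R))%:C)%C.

(* membership in the definition field: the subfield of C generated by the
   coefficients of the lines *)
Definition subfield_closedP (P : C -> Prop) : Prop :=
  [/\ P 1, (forall x y, P x -> P y -> P (x - y)),
      (forall x y, P x -> P y -> P (x * y)) & (forall x, P x -> P x^-1)].

Definition in_def_field n (A : 'I_n -> 'rV[C]_3) (z : C) : Prop :=
  forall P : C -> Prop, subfield_closedP P -> (forall i k, P (A i 0 k)) -> P z.

Definition def_field_Qsqrt5 n (A : 'I_n -> 'rV[C]_3) : Prop :=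
  forall z, in_def_field A z <-> exists a b : rat, z = ratr a + ratr b * sqrt5.

Definition common_lines (phi : C) : seq 'rV[C]_3 :=
  [:: line_of 0 0 1; line_of 1 0 0; line_of 1 0 (-1); line_of 0 1 0;
      line_of 0 1 (-1); line_of 1 (-1) 0; line_of 1 phi (-1);
      line_of phi (- phi) 1; line_of (- phi) (phi - 1) 0; line_of 1 0 (- phi)].

Definition B1_lines (phi : C) : seq 'rV[C]_3 :=
  [:: line_of (phi + 2) (- (phi + 1)) phi;
      line_of (phi - 1) (- phi) (2 * phi - 1);
      line_of (- (2 * phi) + 1) (- (3 * phi) + 2) (phi - 1)].

Definition B2_lines (phi : C) : seq 'rV[C]_3 :=
  [:: line_of (phi + 2) (- (phi + 3)) (phi + 2);
      line_of (- (phi + 1)) (phi - 2) 1;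
      line_of (-1) (- phi + 2) (- (phi + 1))].

Definition B1 (phi : C) : 'I_13 -> 'rV[C]_3 :=
  fun i => nth 0 (common_lines phi ++ B1_lines phi) i.
Definition B2 (phi : C) : 'I_13 -> 'rV[C]_3 :=
  fun i => nth 0 (common_lines phi ++ B2_lines phi) i.

End LineArrangements.

(* Both arrangements have coefficients in Z[phi] with phi ^ 2 = 1 - phi, so their
   combinatorics are compared by exact computation: three lines are concurrent iff
   their bracket (3 x 3 determinant) vanishes.
   A projectivity moves L1, ..., L5 of any realisation of the combinatorics of B1
   to a standard frame.  The incidences then force L7 = (1, t, -1) with
   t ^ 2 = 1 - t, and the first two coordinates (a, b) of L11 satisfy
   b ^ 2 + 2ab + (3t - 1) a ^ 2 = 0.  Two products of brackets recover b and a
   up to a common factor, giving continuous semi-invariants P (linear) and Q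
   (a product of three linear forms) such that exactly one of P, Q vanishes on
   each realisation; P vanishes on B1 and Q on B2.  Their zero sets are
   disjoint, open and saturated, so B1 and B2 lie in different components of
   the moduli space.
   An automorphism of a number field containing the coefficients sends phi to
   phi or to -1 - phi, and in both cases some line of the image of B1 is not a
   line of B2. *)

From HB Require Import structures.
From mathcomp Require Import all_boot all_order all_algebra all_field.
From mathcomp Require Import complex reals.
From mathcomp Require Import ring lra zify.
From Stdlib Require Import FunctionalExtensionality.
Set Implicit Arguments. Unset Strict Implicit. Unset Printing Implicit Defensive.
Import Order.TTheory GRing.Theory Num.Theory Normc.
Local Open Scope ring_scope.

Lemma eq_by_multiple (K : comNzRingType) (x y e k : K) : e = 0 -> x - y = k * e -> x = y.
Proof. by move=> e0 h; apply/subr0_eq; rewrite h e0 mulr0. Qed.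

(** * Vectors and brackets in dimension 3 *)

Definition i0 : 'I_3 := @Ordinal 3 0 isT.
Definition i1 : 'I_3 := @Ordinal 3 1 isT.
Definition i2 : 'I_3 := @Ordinal 3 2 isT.

Section Vector3.
Variable K : comNzRingType.
Implicit Types (a b c k : K) (u v w p : 'rV[K]_3) (g h : 'M[K]_3).

Definition vec3 a b c : 'rV[K]_3 := \row_(j < 3) nth 0 [:: a; b; c] j.

Definition c0 u := u 0 i0.
Definition c1 u := u 0 i1.
Definition c2 u := u 0 i2.

Lemma c0_vec3 a b c : c0 (vec3 a b c) = a. Proof. by rewrite /c0 mxE. Qed.
Lemma c1_vec3 a b c : c1 (vec3 a b c) = b. Proof. by rewrite /c1 mxE. Qed.
Lemma c2_vec3 a b c : c2 (vec3 a b c) = c. Proof. by rewrite /c2 mxE. Qed.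

Lemma vec3E u : u = vec3 (c0 u) (c1 u) (c2 u).
Proof.
by apply/rowP => -[[|[|[|j]]] hj]; rewrite mxE //=; congr (u _ _); apply: val_inj.
Qed.

Lemma vec3_eq0 u : (u == 0) = [&& c0 u == 0, c1 u == 0 & c2 u == 0].
Proof.
apply/eqP/and3P => [->|[/eqP h0 /eqP h1 /eqP h2]]; first by rewrite /c0 /c1 /c2 !mxE.
by rewrite (vec3E u) h0 h1 h2; apply/rowP => -[[|[|[|j]]] hj]; rewrite !mxE.
Qed.

Lemma vec3_0 : vec3 0 0 0 = 0.
Proof. by apply/rowP => -[[|[|[|j]]] hj]; rewrite !mxE. Qed.

Lemma scale_vec3 k a b c : k *: vec3 a b c = vec3 (k * a) (k * b) (k * c).
Proof. by apply/rowP => -[[|[|[|j]]] hj]; rewrite !mxE. Qed.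

Lemma c0Z k u : c0 (k *: u) = k * c0 u. Proof. by rewrite /c0 mxE. Qed.
Lemma c1Z k u : c1 (k *: u) = k * c1 u. Proof. by rewrite /c1 mxE. Qed.
Lemma c2Z k u : c2 (k *: u) = k * c2 u. Proof. by rewrite /c2 mxE. Qed.

Lemma sum3 (f : 'I_3 -> K) : \sum_j f j = f i0 + f i1 + f i2.
Proof. by rewrite !big_ord_recr big_ord0 /= add0r; congr (f _ + f _ + f _); apply: val_inj. Qed.

Lemma c0M u g : c0 (u *m g) = c0 u * g i0 i0 + c1 u * g i1 i0 + c2 u * g i2 i0.
Proof. by rewrite /c0 mxE sum3. Qed.
Lemma c1M u g : c1 (u *m g) = c0 u * g i0 i1 + c1 u * g i1 i1 + c2 u * g i2 i1.
Proof. by rewrite /c1 mxE sum3. Qed.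
Lemma c2M u g : c2 (u *m g) = c0 u * g i0 i2 + c1 u * g i1 i2 + c2 u * g i2 i2.
Proof. by rewrite /c2 mxE sum3. Qed.

Lemma mul_diag_vec3 u a b c :
  u *m diag_mx (vec3 a b c) = vec3 (c0 u * a) (c1 u * b) (c2 u * c).
Proof.
rewrite mul_mx_diag; apply/rowP => -[[|[|[|j]]] hj]; rewrite !mxE /c0 /c1 /c2 //=;
  by congr (u _ _ * _); apply: val_inj.
Qed.

Definition dot u p := c0 u * c0 p + c1 u * c1 p + c2 u * c2 p.

Definition cross u v := vec3 (c1 u * c2 v - c2 u * c1 v) (c2 u * c0 v - c0 u * c2 v)
  (c0 u * c1 v - c1 u * c0 v).

Definition bracket u v w := dot w (cross u v).

Lemma cross_vec3 a b c a' b' c' : cross (vec3 a b c) (vec3 a' b' c') =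
  vec3 (b * c' - c * b') (c * a' - a * c') (a * b' - b * a').
Proof. by rewrite /cross !c0_vec3 !c1_vec3 !c2_vec3. Qed.

Lemma crossZl k u v : cross (k *: u) v = k *: cross u v.
Proof. by rewrite /cross !c0Z !c1Z !c2Z scale_vec3; congr vec3; ring. Qed.

Lemma dotC u p : dot u p = dot p u.
Proof. by rewrite /dot; ring. Qed.

Lemma dot_mxE u p : (u *m p^T) 0 0 = dot u p.
Proof. by rewrite mxE sum3 !mxE. Qed.

Lemma dot_crossl u v : dot u (cross u v) = 0.
Proof. by rewrite /dot /cross !c0_vec3 !c1_vec3 !c2_vec3; ring. Qed.

Lemma dot_crossr u v : dot v (cross u v) = 0.
Proof. by rewrite /dot /cross !c0_vec3 !c1_vec3 !c2_vec3; ring. Qed.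

Lemma cross_scaler u k : cross u (k *: u) = 0.
Proof.
rewrite /cross !c0Z !c1Z !c2Z.
by apply/rowP => -[[|[|[|j]]] hj]; rewrite !mxE //=; ring.
Qed.

Lemma bracketE u v w : bracket u v w = c0 w * (c1 u * c2 v - c2 u * c1 v) +
  c1 w * (c2 u * c0 v - c0 u * c2 v) + c2 w * (c0 u * c1 v - c1 u * c0 v).
Proof. by rewrite /bracket /dot /cross !c0_vec3 !c1_vec3 !c2_vec3. Qed.

Lemma bracket_vec3 a b c a' b' c' a'' b'' c'' :
  bracket (vec3 a b c) (vec3 a' b' c') (vec3 a'' b'' c'') =
  a'' * (b * c' - c * b') + b'' * (c * a' - a * c') + c'' * (a * b' - b * a').
Proof. by rewrite /bracket /dot /cross !c0_vec3 !c1_vec3 !c2_vec3. Qed.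

Lemma bracketZ a b c u v w :
  bracket (a *: u) (b *: v) (c *: w) = a * b * c * bracket u v w.
Proof. by rewrite /bracket /dot /cross !c0Z !c1Z !c2Z !c0_vec3 !c1_vec3 !c2_vec3; ring. Qed.

Definition rows_bracket g := bracket (row i0 g) (row i1 g) (row i2 g).

Lemma bracketM u v w g : bracket (u *m g) (v *m g) (w *m g) = bracket u v w * rows_bracket g.
Proof.
rewrite /rows_bracket /bracket /dot /cross !c0_vec3 !c1_vec3 !c2_vec3 !c0M !c1M !c2M.
by rewrite /c0 /c1 /c2 !mxE; ring.
Qed.

Lemma rows_bracket1 : rows_bracket 1%:M = 1.
Proof.
by rewrite /rows_bracket /bracket /dot /cross !c0_vec3 !c1_vec3 !c2_vec3 /c0 /c1 /c2 !mxE /=; ring.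
Qed.

Lemma rows_bracketM g h : rows_bracket (g *m h) = rows_bracket g * rows_bracket h.
Proof. by rewrite /rows_bracket !row_mul bracketM. Qed.

End Vector3.

Section FieldVector3.
Variable K : fieldType.
Implicit Types (u v w p : 'rV[K]_3) (g : 'M[K]_3).

Lemma rows_bracket_neq0 g : g \in unitmx -> rows_bracket g != 0.
Proof.
move=> hg; apply: contra_eq_neq (rows_bracketM g (invmx g)) => ->.
by rewrite mulmxV // rows_bracket1 mul0r oner_neq0.
Qed.

Lemma vec3_neq0 p : p != 0 -> [\/ c0 p != 0, c1 p != 0 | c2 p != 0].
Proof. by rewrite vec3_eq0 !negb_and => /or3P. Qed.

Lemma vec3P u v : c0 u = c0 v -> c1 u = c1 v -> c2 u = c2 v -> u = v.
Proof. by move=> h0 h1 h2; rewrite [u]vec3E [v]vec3E h0 h1 h2. Qed.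

Lemma cross_crossl u v p : cross (cross u v) p = dot u p *: v - dot v p *: u.
Proof.
by apply: vec3P; rewrite /cross !c0_vec3 !c1_vec3 !c2_vec3 /dot /c0 /c1 /c2 !mxE; ring.
Qed.

Lemma cross_eq0_scale w p : w != 0 -> cross w p = 0 -> exists k, p = k *: w.
Proof.
move=> /vec3_neq0 hw /eqP; rewrite vec3_eq0 !c0_vec3 !c1_vec3 !c2_vec3.
case/and3P => /eqP e0 /eqP e1 /eqP e2.
have solve (a b c x : K) : b != 0 -> b * x - c * a = 0 -> x = a / b * c.
  by move=> hb /subr0_eq hx; apply: (mulfI hb); rewrite hx; field.
rewrite [p]vec3E [w]vec3E.
case: hw => hw; [exists (c0 p / c0 w) | exists (c1 p / c1 w) | exists (c2 p / c2 w)];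
  rewrite scale_vec3.
- by congr vec3; [field | apply: solve | apply: solve; rewrite // -opprB e1 oppr0].
- by congr vec3; [apply: solve; rewrite // -opprB e2 oppr0 | field | apply: solve].
- by congr vec3; [apply: solve | apply: solve; rewrite // -opprB e0 oppr0 | field].
Qed.

Lemma common_point_cross u v p : dot u p = 0 -> dot v p = 0 -> p != 0 ->
  cross u v != 0 -> exists2 k, k != 0 & p = k *: cross u v.
Proof.
move=> hu hv hp huv.
have [k hk] : exists k, p = k *: cross u v.
  by apply: cross_eq0_scale; rewrite // cross_crossl hu hv !scale0r subr0.
by exists k => //; apply: contraNneq hp => k0; rewrite hk k0 scale0r.
Qed.

Lemma dotZr u k p : dot u (k *: p) = k * dot u p.
Proof. by rewrite /dot !c0Z !c1Z !c2Z; ring. Qed.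

Lemma bracket_eq0_common_point u v w p : dot u p = 0 -> dot v p = 0 -> dot w p = 0 ->
  p != 0 -> bracket u v w = 0.
Proof.
move=> hu hv hw hp; have [huv|huv] := eqVneq (cross u v) 0.
  by rewrite /bracket huv -(scale0r 0) dotZr mul0r.
have [k hk0 hk] := common_point_cross hu hv hp huv.
by move/eqP: hw; rewrite hk dotZr mulf_eq0 (negbTE hk0) => /eqP.
Qed.

Lemma rows_unitmx u v w : bracket u v w != 0 -> \matrix_(r < 3) nth 0 [:: u; v; w] r \in unitmx.
Proof.
rewrite unitmxE unitfE -det_tr => huvw; apply: contra huvw => /det0P [p hp hpM].
have hd (r : 'I_3) : dot (nth 0 [:: u; v; w] r) p = 0.
  have := congr1 (fun m : 'rV[K]_3 => m 0 r) hpM; rewrite !mxE sum3 !mxE.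
  by rewrite /dot /c0 /c1 /c2 => <-; ring.
by apply/eqP; apply: bracket_eq0_common_point (hd i0) (hd i1) (hd i2) hp.
Qed.

Lemma coordinate_frame u v w : bracket u v w != 0 -> exists2 g, g \in unitmx &
  [/\ u *m g = vec3 1 0 0, v *m g = vec3 0 1 0 & w *m g = vec3 0 0 1].
Proof.
move=> /rows_unitmx hM; exists (invmx (\matrix_(r < 3) nth 0 [:: u; v; w] r)).
  by rewrite unitmx_inv.
have hrow (r : 'I_3) : nth 0 [:: u; v; w] r *m invmx (\matrix_(r < 3) nth 0 [:: u; v; w] r) =
    row r 1%:M by rewrite -[nth 0 _ r](rowK (fun r : 'I_3 => nth 0 [:: u; v; w] r)) -row_mul mulmxV.
by split; [move: (hrow i0) | move: (hrow i1) | move: (hrow i2)] => /= ->;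
  apply/rowP => -[[|[|[|j]]] hj]; rewrite !mxE.
Qed.

Lemma diagonal_frame (a b c d : K) : a != 0 -> b != 0 -> c != 0 -> d != 0 ->
  exists2 g, g \in unitmx & [/\ vec3 1 0 0 *m g = (- c / a) *: vec3 1 0 0,
    vec3 0 1 0 *m g = (- d / b) *: vec3 0 1 0, vec3 0 0 1 *m g = vec3 0 0 1,
    vec3 a 0 c *m g = (- c) *: vec3 1 0 (-1) & vec3 0 b d *m g = (- d) *: vec3 0 1 (-1)].
Proof.
move=> ha hb hc hd; exists (diag_mx (vec3 (- c / a) (- d / b) 1)).
  rewrite unitmxE det_diag unitfE !big_ord_recr big_ord0 !mxE /= mul1r mulr1.
  by rewrite !mulf_neq0 ?oppr_eq0 ?invr_eq0.
by split; rewrite mul_diag_vec3 !c0_vec3 !c1_vec3 !c2_vec3 ?scale_vec3;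
  congr (vec3 _ _ _); field; rewrite ?ha ?hb.
Qed.

End FieldVector3.

(** * The golden integers *)

(* [(a, b) : zphi] stands for [a + b phi] with [phi ^+ 2 = 1 - phi]. *)
Definition zphi := (int * int)%type.
Definition gadd (x y : zphi) : zphi := (x.1 + y.1, x.2 + y.2).
Definition gsub (x y : zphi) : zphi := (x.1 - y.1, x.2 - y.2).
Definition gmul (x y : zphi) : zphi :=
  (x.1 * y.1 + x.2 * y.2, x.1 * y.2 + x.2 * y.1 - x.2 * y.2).
(* the Galois conjugation [phi |-> -1 - phi] *)
Definition gconj (x : zphi) : zphi := (x.1 - x.2, - x.2).

Definition gvec := (zphi * zphi * zphi)%type.
Definition gzero : gvec := ((0, 0), (0, 0), (0, 0)).
Definition gdot (u w : gvec) : zphi :=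
  gadd (gadd (gmul u.1.1 w.1.1) (gmul u.1.2 w.1.2)) (gmul u.2 w.2).
Definition gcross (u v : gvec) : gvec :=
  (gsub (gmul u.1.2 v.2) (gmul u.2 v.1.2),
   gsub (gmul u.2 v.1.1) (gmul u.1.1 v.2),
   gsub (gmul u.1.1 v.1.2) (gmul u.1.2 v.1.1)).
Definition gbracket (u v w : gvec) : zphi := gdot w (gcross u v).
Definition gconjv (u : gvec) : gvec := (gconj u.1.1, gconj u.1.2, gconj u.2).

(* The line [L_n] of the paper has index [n - 1], written ['L_n] below. *)
Definition gcommon : seq gvec :=
  [:: ((0, 0), (0, 0), (1, 0)); ((1, 0), (0, 0), (0, 0)); ((1, 0), (0, 0), (-1, 0));
      ((0, 0), (1, 0), (0, 0)); ((0, 0), (1, 0), (-1, 0)); ((1, 0), (-1, 0), (0, 0));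
      ((1, 0), (0, 1), (-1, 0)); ((0, 1), (0, -1), (1, 0)); ((0, -1), (-1, 1), (0, 0));
      ((1, 0), (0, 0), (0, -1))].
Definition gB1 : seq gvec := gcommon ++
  [:: ((2, 1), (-1, -1), (0, 1)); ((-1, 1), (0, -1), (-1, 2)); ((1, -2), (2, -3), (-1, 1))].
Definition gB2 : seq gvec := gcommon ++
  [:: ((2, 1), (-3, -1), (2, 1)); ((-1, -1), (-2, 1), (1, 0)); ((-1, 0), (2, -1), (-1, -1))].

Notation "''L_' n" := (@Ordinal 13 n.-1 isT) (at level 8, n at level 2, format "''L_' n").

Lemma ord13_in_iota (i : 'I_13) : (i : nat) \in iota 0 13.
Proof. by rewrite mem_iota ltn_ord. Qed.

Definition gline (s : seq gvec) (i : nat) : gvec := nth gzero s i.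
Definition gconcurrent (s : seq gvec) (i j l : nat) : bool :=
  gbracket (gline s i) (gline s j) (gline s l) == (0, 0).

Definition gdistinct_lines (s : seq gvec) : bool :=
  all (fun i => all (fun j => (i == j) || (gcross (gline s i) (gline s j) != gzero))
    (iota 0 13)) (iota 0 13).

Definition same_concurrences (s t : seq gvec) : bool :=
  all (fun i => all (fun j => all (fun l => gconcurrent s i j l == gconcurrent t i j l)
    (iota 0 13)) (iota 0 13)) (iota 0 13).

Definition has_line_outside (s t : seq gvec) : bool :=
  has (fun i => all (fun j => gcross (gline s i) (gline t j) != gzero)
    (iota 0 13)) (iota 0 13).

Lemma gdistinct_lines_gB1 : gdistinct_lines gB1. Proof. by vm_compute. Qed.
Lemma gdistinct_lines_gB2 : gdistinct_lines gB2. Proof. by vm_compute. Qed.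
Lemma same_concurrences_gB12 : same_concurrences gB1 gB2. Proof. by vm_compute. Qed.
Lemma has_line_outside_gB1 : has_line_outside gB1 gB2. Proof. by vm_compute. Qed.
Lemma has_line_outside_conj_gB1 : has_line_outside (map gconjv gB1) gB2.
Proof. by vm_compute. Qed.

Section GoldenEvaluation.
Variables (K : comNzRingType) (phi : K).
Hypothesis phi_golden : phi ^+ 2 = 1 - phi.

Definition gev (x : zphi) : K := x.1%:~R + x.2%:~R * phi.
Definition gevv (u : gvec) : 'rV[K]_3 := vec3 (gev u.1.1) (gev u.1.2) (gev u.2).
Definition garr (s : seq gvec) : 'I_13 -> 'rV[K]_3 := fun i => gevv (gline s i).

Lemma garr_entry s i k : exists x, garr s i 0 k = gev x.
Proof. by rewrite /garr /gevv mxE; case: k => -[|[|[|k]]] hk //; eexists. Qed.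

Lemma gevD x y : gev (gadd x y) = gev x + gev y. Proof. by rewrite /gev /=; ring. Qed.
Lemma gevB x y : gev (gsub x y) = gev x - gev y. Proof. by rewrite /gev /=; ring. Qed.
Lemma gevM x y : gev (gmul x y) = gev x * gev y.
Proof.
apply/eqP; rewrite -subr_eq0; apply/eqP; rewrite /gev /=.
transitivity ((x.2 * y.2)%:~R * (1 - phi - phi ^+ 2) : K); first by ring.
by rewrite phi_golden subrr mulr0.
Qed.

Lemma dot_gevv u w : dot (gevv u) (gevv w) = gev (gdot u w).
Proof. by rewrite /dot /gevv !c0_vec3 !c1_vec3 !c2_vec3 !gevD !gevM. Qed.

Lemma cross_gevv u v : cross (gevv u) (gevv v) = gevv (gcross u v).
Proof. by rewrite /cross /gevv !c0_vec3 !c1_vec3 !c2_vec3 /= !gevB !gevM. Qed.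

Lemma bracket_gevv u v w : bracket (gevv u) (gevv v) (gevv w) = gev (gbracket u v w).
Proof. by rewrite /bracket cross_gevv dot_gevv. Qed.

End GoldenEvaluation.

Lemma golden_roots (K : idomainType) (x y : K) : x ^+ 2 = 1 - x -> y ^+ 2 = 1 - y ->
  y = x \/ y = - 1 - x.
Proof.
move=> hx hy; have : (y - x) * (y + x + 1) = 0.
  transitivity (y ^+ 2 - x ^+ 2 + (y - x)); first by ring.
  by rewrite hx hy; ring.
move/eqP; rewrite mulf_eq0 => /orP [/eqP /subr0_eq|/eqP e]; first by left.
by right; apply: (eq_by_multiple (k := 1) e); ring.
Qed.

Lemma gev_conj (K : comNzRingType) (phi : K) x : gev (- 1 - phi) x = gev phi (gconj x).
Proof. by rewrite /gev /=; ring. Qed.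

Lemma garr_conj (K : comNzRingType) (phi : K) s (i : 'I_13) : (i < size s)%N ->
  garr (- 1 - phi) s i = garr phi (map gconjv s) i.
Proof. by move=> hi; rewrite /garr /gline (nth_map gzero) // /gevv !gev_conj. Qed.

Section GoldenMorphism.
Variables (K L : comNzRingType) (f : {rmorphism K -> L}) (q : K).

Lemma gev_rmorph x : f (gev q x) = gev (f q) x.
Proof. by rewrite /gev rmorphD rmorphM !rmorph_int. Qed.

Lemma gevv_rmorph u : map_mx f (gevv q u) = gevv (f q) u.
Proof. by apply/rowP => -[[|[|[|k]]] hk]; rewrite !mxE //= gev_rmorph. Qed.

End GoldenMorphism.

(** * Incidence of lines *)

Section Incidence.
Variable R : realType.
Local Notation C := R[i].
Implicit Types (k : C) (u v p : 'rV[C]_3) (g : 'M[C]_3).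

Lemma line_ofE (a b c : C) : line_of a b c = vec3 a b c. Proof. by []. Qed.

Lemma on_lineE (l p : 'rV[C]_3) : on_line l p = (dot l p == 0).
Proof. by rewrite /on_line dot_mxE. Qed.

Lemma on_lineZ k (l p : 'rV[C]_3) : k != 0 -> on_line (k *: l) p = on_line l p.
Proof. by move=> hk; rewrite /on_line -scalemxAl mxE mulf_eq0 (negbTE hk). Qed.

Lemma on_lineZr k (l p : 'rV[C]_3) : k != 0 -> on_line l (k *: p) = on_line l p.
Proof. by move=> hk; rewrite !on_lineE dotZr mulf_eq0 (negbTE hk). Qed.

Lemma on_line_mulmx (l p : 'rV[C]_3) g : g \in unitmx ->
  on_line (l *m g) (p *m (invmx g)^T) = on_line l p.
Proof. by move=> hg; rewrite /on_line trmx_mul trmxK mulmxA -(mulmxA l) mulmxV ?mulmx1. Qed.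

Lemma mulmx_unit_eq0 u g : g \in unitmx -> (u *m g == 0) = (u == 0).
Proof. by move=> hg; have := inj_eq (can_inj (mulmxK hg)) u 0; rewrite mul0mx. Qed.

Lemma same_line_proj u v g k k' : g \in unitmx -> k != 0 -> k' != 0 ->
  same_line (k *: (u *m g)) (k' *: (v *m g)) -> same_line u v.
Proof.
move=> hg hk hk' [c [hc e]]; exists (c * k / k'); split; first by rewrite !mulf_neq0 ?invr_eq0.
apply: (can_inj (mulmxK hg)); apply: (scalerI hk').
by rewrite /= -scalemxAl e !scalerA; congr (_ *: _); field.
Qed.

Lemma same_line_refl u : same_line u u.
Proof. by exists 1; rewrite scale1r oner_neq0. Qed.

Lemma bracket_eq0_same_line d1 d2 d3 u1 u2 u3 :
  same_line d1 u1 -> same_line d2 u2 -> same_line d3 u3 ->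
  bracket u1 u2 u3 = 0 -> bracket d1 d2 d3 = 0.
Proof.
move=> [k1 [hk1 ->]] [k2 [hk2 ->]] [k3 [hk3 ->]] /eqP.
by rewrite bracketZ !mulf_eq0 (negbTE hk1) (negbTE hk2) (negbTE hk3) => /eqP.
Qed.

Lemma same_line_trans u v w : same_line u v -> same_line v w -> same_line u w.
Proof.
move=> [k [hk ->]] [l [hl ->]]; exists (l * k).
by rewrite mulf_neq0 // scalerA.
Qed.

Lemma same_line_neq0 u v : u != 0 -> same_line u v -> v != 0.
Proof. by move=> hu [k [hk ->]]; rewrite scaler_eq0 negb_or hk. Qed.

Lemma same_line_meet d1 d2 d3 d4 u1 u2 u3 u4 w d :
  same_line d1 u1 -> same_line d2 u2 -> same_line d3 u3 -> same_line d4 u4 ->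
  bracket u1 u2 w = 0 -> bracket u3 u4 w = 0 -> w != 0 ->
  d != 0 -> same_line d (cross (cross d1 d2) (cross d3 d4)) -> same_line d w.
Proof.
move=> h1 h2 h3 h4 /(bracket_eq0_same_line h1 h2 (same_line_refl w)) e12.
move=> /(bracket_eq0_same_line h3 h4 (same_line_refl w)) e34 hw hd0 hd.
rewrite /bracket dotC in e12; rewrite /bracket dotC in e34.
have [l hl hwl] := common_point_cross e12 e34 hw (same_line_neq0 hd0 hd).
by apply: same_line_trans hd _; exists l.
Qed.

Variable n : nat.
Implicit Types (A B D : 'I_n -> 'rV[C]_3) (S : {set 'I_n}) (i j l : 'I_n).

Definition distinct_lines A := forall i j, i != j -> cross (A i) (A j) != 0.

Definition concurrent A i j l :=
  exists2 p, p != 0 & [/\ on_line (A i) p, on_line (A j) p & on_line (A l) p].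

Lemma concurrent_bracket A i j l : concurrent A i j l -> bracket (A i) (A j) (A l) = 0.
Proof.
case=> p hp; rewrite !on_lineE => -[/eqP hi /eqP hj /eqP hl].
exact: bracket_eq0_common_point hi hj hl hp.
Qed.

Lemma lines_through_cross A i j :
  lines_through A (cross (A i) (A j)) = [set l | bracket (A i) (A j) (A l) == 0].
Proof. by apply/setP => l; rewrite !inE on_lineE. Qed.

Lemma sing_cross A S : distinct_lines A ->
  sing A S <-> exists i j, i != j /\ S = lines_through A (cross (A i) (A j)).
Proof.
move=> hA; split.
  case=> p [hp [-> /card_gt1P [i [j [hi hj hij]]]]]; exists i, j; split => //.
  move: hi hj; rewrite !inE !on_lineE => /eqP hi /eqP hj.
  have [k hk ->] := common_point_cross hi hj hp (hA _ _ hij).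
  by apply/setP => l; rewrite !inE on_lineZr.
case=> i [j [hij ->]]; exists (cross (A i) (A j)); split; first exact: hA.
split => //; apply/card_gt1P; exists i, j.
by rewrite !inE !on_lineE dot_crossl dot_crossr.
Qed.

Lemma bracket_concurrent A i j l : distinct_lines A -> i != j ->
  bracket (A i) (A j) (A l) = 0 -> concurrent A i j l.
Proof.
move=> hA hij hl; exists (cross (A i) (A j)); first exact: hA.
by rewrite !on_lineE dot_crossl dot_crossr -/(bracket _ _ _) hl.
Qed.

Lemma same_comb_concurrent A B i j l : same_comb A B -> i != j ->
  concurrent A i j l -> concurrent B i j l.
Proof.
move=> hAB hij [p hp [hi hj hl]].
have [|q [hq [hS _]]] := (hAB (lines_through A p)).1.
  by exists p; split => //; split => //; apply/card_gt1P; exists i, j; rewrite !inE.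
have on_q m : on_line (A m) p -> on_line (B m) q.
  move=> hm; have : m \in lines_through A p by rewrite inE.
  by rewrite hS inE.
by exists q => //; split; apply: on_q.
Qed.

Lemma same_comb_brackets A B : distinct_lines A -> distinct_lines B ->
  (forall i j l, (bracket (A i) (A j) (A l) == 0) = (bracket (B i) (B j) (B l) == 0)) ->
  same_comb A B.
Proof.
move=> hA hB hAB S; rewrite (sing_cross _ hA) (sing_cross _ hB).
by split; case=> i [j [hij ->]]; exists i, j; split => //;
  rewrite !lines_through_cross; apply/setP => l; rewrite !inE hAB.
Qed.

Lemma proj_equiv_sym A B : proj_equiv A B -> proj_equiv B A.
Proof.
case=> g [hg hAB]; exists (invmx g); split; first by rewrite unitmx_inv.
move=> i; have [k [hk ->]] := hAB i; exists k^-1; split; first by rewrite invr_eq0.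
by rewrite -scalemxAl mulmxK // scalerA mulVf // scale1r.
Qed.

Lemma sing_proj_equiv A B S : proj_equiv A B -> sing A S -> sing B S.
Proof.
case=> g [hg hAB] [p [hp [-> hS]]]; exists (p *m (invmx g)^T); split.
  by rewrite mulmx_unit_eq0 // unitmx_tr unitmx_inv.
split => //; apply/setP => i; rewrite !inE.
by have [k [hk ->]] := hAB i; rewrite on_lineZ // on_line_mulmx.
Qed.

Lemma is_arr_proj_equiv A B : proj_equiv A B -> is_arr A -> is_arr B.
Proof.
case=> g [hg hAB] [hA0 hAd]; split => [i|i j hij hBij].
  by have [k [hk ->]] := hAB i; rewrite scaler_eq0 (negbTE hk) mulmx_unit_eq0 //=; apply: hA0.
apply: (hAd i j hij); have [ki [hki hBi]] := hAB i; have [kj [hkj hBj]] := hAB j.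
by apply: (same_line_proj hg hki hkj); rewrite -hBi -hBj.
Qed.

Lemma proj_equiv_mulmx A g : g \in unitmx -> proj_equiv A (fun i => A i *m g).
Proof. by move=> hg; exists g; split => // i; exists 1; rewrite scale1r oner_neq0. Qed.

Lemma is_arr_cross A i j : is_arr A -> i != j -> cross (A i) (A j) != 0.
Proof.
move=> [hA0 hAd] hij; apply/eqP => /(cross_eq0_scale (hA0 i)) [k hk].
apply: (hAd i j hij); exists k; split => //.
by apply: contra_neq (hA0 j) => k0; rewrite hk k0 scale0r.
Qed.

Lemma realization_proj_equiv A0 A B :
  realization A0 A -> proj_equiv A B -> realization A0 B.
Proof.
move=> [hA hcomb] hAB; split; first exact: is_arr_proj_equiv hA.
move=> S; rewrite hcomb; split; first exact: sing_proj_equiv.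
exact/sing_proj_equiv/proj_equiv_sym.
Qed.

End Incidence.

Lemma distinct_lines_is_arr (R : realType) n (A : 'I_n.+2 -> 'rV[R[i]]_3) :
  distinct_lines A -> is_arr A.
Proof.
move=> hA; split => [i|i j hij [k [_ hk]]]; last first.
  by move: (hA i j hij); rewrite hk cross_scaler eqxx.
pose j : 'I_n.+2 := if i == ord0 then ord_max else ord0.
have hji : j != i by rewrite /j; case: (i =P ord0) => [->|/eqP]; rewrite // eq_sym.
by apply: contraNneq _ (hA j i hji) => ->; rewrite -[X in cross _ X](scale0r (A j)) cross_scaler.
Qed.

(** * The field Q(sqrt 5) *)

Lemma nat_sqr_eq_5sqr (x y : nat) : (x * x = 5 * (y * y))%N -> y = 0%N.
Proof.
move=> h; have [//|y0] := posnP y.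
have x0 : (0 < x)%N by rewrite lt0n; apply/eqP => x0; move: h; rewrite x0; nia.
have := congr1 (logn 5) h.
by rewrite !lognM ?muln_gt0 ?x0 ?y0 // (@logn_prime 5 5) //=; lia.
Qed.

Lemma int_sqr_eq_5sqr (x y : int) : x * x = 5 * (y * y) -> y = 0.
Proof.
move=> /(congr1 absz); rewrite !abszM => /nat_sqr_eq_5sqr /eqP.
by rewrite absz_eq0 => /eqP.
Qed.

Lemma rat_sqr_eq_5sqr (x y : rat) : x * x = 5 * (y * y) -> y = 0.
Proof.
move=> h; apply/eqP; rewrite -numq_eq0; apply/eqP.
suff /int_sqr_eq_5sqr /eqP : (numq x * denq y) * (numq x * denq y) =
    5 * ((numq y * denq x) * (numq y * denq x)).
  by rewrite mulf_eq0 denq_eq0 orbF => /eqP.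
apply: (@intr_inj rat); rewrite !rmorphM /= !numqE.
transitivity ((x * x) * ((denq x)%:~R * (denq y)%:~R) ^+ 2 : rat); first by ring.
by rewrite h; ring.
Qed.

Lemma garr_nth (K : comNzRingType) (phi : K) (s : seq gvec) : size s = 13 ->
  (fun i : 'I_13 => nth 0 (map (gevv phi) s) i) = garr phi s.
Proof. by move=> hs; apply: functional_extensionality => i; rewrite (nth_map gzero) ?hs. Qed.

Section Golden.
Variable R : realType.
Local Notation C := R[i].
Local Notation s5 := (sqrt5 R).

Lemma B1E (phi : C) : B1 phi = garr phi gB1.
Proof.
rewrite -garr_nth // (_ : map _ _ = common_lines phi ++ B1_lines phi) //.
by rewrite /=; do 13!(apply: congr2; first by rewrite line_ofE /gevv /gev /=; congr vec3; ring).
Qed.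

Lemma B2E (phi : C) : B2 phi = garr phi gB2.
Proof.
rewrite -garr_nth // (_ : map _ _ = common_lines phi ++ B2_lines phi) //.
by rewrite /=; do 13!(apply: congr2; first by rewrite line_ofE /gevv /gev /=; congr vec3; ring).
Qed.

Lemma sqrt5_sqr : s5 ^+ 2 = 5.
Proof. by rewrite /sqrt5 -rmorphXn /= sqr_sqrtr ?ler0n // (rmorph_nat (real_complex R) 5). Qed.

Lemma sqrt5_real : s5 \is Num.real.
Proof. by apply/complex_realP; exists (Num.sqrt 5). Qed.

Lemma rat_sqrt5_eq0 (a b : rat) : ratr a + ratr b * s5 = 0 -> a = 0 /\ b = 0.
Proof.
move=> h.
have hb : b = 0.
  apply: (@rat_sqr_eq_5sqr a); apply/eqP; rewrite -subr_eq0 -(fmorph_eq0 (@ratr C)).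
  have ha : ratr a = - (ratr b * s5) :> C by apply/eqP; rewrite -subr_eq0 opprK h.
  by rewrite rmorphB !rmorphM /= (rmorph_nat _ 5) ha -sqrt5_sqr; apply/eqP; ring.
by split => //; move: h; rewrite hb rmorph0 mul0r addr0 => /eqP; rewrite fmorph_eq0 => /eqP.
Qed.

Definition in_Qsqrt5 (z : C) := exists a b : rat, z = ratr a + ratr b * s5.

Section SubfieldClosed.
Variable P : C -> Prop.
Hypothesis P_subfield : subfield_closedP P.

Lemma subfield_opp x : P x -> P (- x).
Proof.
have [h1 hB _ _] := P_subfield.
by move=> hx; rewrite -sub0r -(subrr 1); apply: (hB) => //; apply: (hB).
Qed.

Lemma subfield_add x y : P x -> P y -> P (x + y).
Proof.
have [_ hB _ _] := P_subfield.
by move=> hx hy; rewrite -[y]opprK; apply: (hB) => //; apply: subfield_opp.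
Qed.

Lemma subfield_ratr a : P (ratr a).
Proof.
have [h1 hB hM hV] := P_subfield.
have hn (m : nat) : P m%:R.
  elim: m => [|m IH]; first by rewrite mulr0n -(subrr 1); apply: (hB).
  by rewrite mulrS; apply: subfield_add.
have hz (z : int) : P z%:~R.
  by case: z => m; rewrite ?NegzE ?mulrNz; [|apply: subfield_opp]; rewrite -pmulrn.
by rewrite /ratr; apply: (hM); [|apply: (hV)].
Qed.

End SubfieldClosed.

Lemma Qsqrt5_subfield : subfield_closedP in_Qsqrt5.
Proof.
split.
- by exists 1, 0; rewrite rmorph1 rmorph0 mul0r addr0.
- move=> _ _ [a [b ->]] [c [d ->]]; exists (a - c), (b - d).
  by rewrite !rmorphB /=; ring.
- move=> _ _ [a [b ->]] [c [d ->]]; exists (a * c + 5 * (b * d)), (a * d + b * c).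
  by rewrite !rmorphD !rmorphM /= (rmorph_nat _ 5) -sqrt5_sqr; ring.
move=> _ [a [b ->]]; pose m := a * a - 5 * (b * b).
have [m0|m0] := eqVneq m 0.
  have hb : b = 0 by apply: (@rat_sqr_eq_5sqr a); apply: subr0_eq.
  move: m0; rewrite /m hb mulr0 subr0 => /eqP; rewrite mulf_eq0 orbb => /eqP ->.
  by exists 0, 0; rewrite !rmorph0 mul0r addr0 invr0.
have hm : ratr m != 0 :> C by rewrite fmorph_eq0.
have hconj : (ratr a + ratr b * s5) * (ratr a - ratr b * s5) = ratr m :> C.
  by rewrite /m rmorphB !rmorphM /= (rmorph_nat _ 5) -sqrt5_sqr; ring.
have hx : ratr a + ratr b * s5 != 0 :> C.
  by apply: contraNneq hm => h0; rewrite -hconj h0 mul0r.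
exists (a / m), (- b / m); rewrite !fmorph_div rmorphN /=.
apply: (mulfI hx); rewrite mulfV // -(divff hm) -{1}hconj; field; exact: hm.
Qed.

Variable phi : C.
Hypothesis phi_def : phi = (-1 + s5) / 2 \/ phi = (-1 - s5) / 2.

Lemma sqrt5_phi : s5 = 2 * phi + 1 \/ s5 = - (2 * phi + 1).
Proof.
have h2 : (2 : C) != 0 by rewrite pnatr_eq0.
by case: phi_def => ->; [left | right]; field.
Qed.

Lemma sqrt5_phi_golden : phi ^+ 2 = 1 - phi.
Proof.
have h4 : (4 : C) != 0 by rewrite pnatr_eq0.
have h : (2 * phi + 1) ^+ 2 - 5 = 0 by rewrite -sqrt5_sqr; case: sqrt5_phi => ->; ring.
by apply/subr0_eq/(mulfI h4); rewrite mulr0 -h; ring.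
Qed.

Lemma sqrt5_phi_irrational (a b : int) : a%:~R + b%:~R * phi = 0 -> a = 0 /\ b = 0.
Proof.
move=> h; have [e he hs] : exists2 e : int, e ^+ 2 = 1 & s5 = e%:~R * (2 * phi + 1).
  by case: sqrt5_phi => ->; [exists 1 | exists (-1)] => //; ring.
have /rat_sqrt5_eq0 [] : ratr (2 * a - b)%:~R + ratr (e * b)%:~R * s5 = 0.
  rewrite !ratr_int hs -[RHS](mulr0 2) -h.
  transitivity ((2 * a - b)%:~R + (e ^+ 2 * b)%:~R * (2 * phi + 1) : C); first by ring.
  by rewrite he; ring.
move/eqP; rewrite intr_eq0 => /eqP h1 /eqP; rewrite intr_eq0 mulf_eq0 => /orP [/eqP e0|/eqP b0].
  by move: he; rewrite e0.
by split; lia.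
Qed.

Lemma gev_Qsqrt5 x : in_Qsqrt5 (gev phi x).
Proof.
have h2 : (2 : C) != 0 by rewrite pnatr_eq0.
case: phi_def => ->; exists (x.1%:~R - x.2%:~R / 2);
  [exists (x.2%:~R / 2) | exists (- (x.2%:~R / 2))];
  by rewrite /gev ?rmorphN rmorphB !fmorph_div !rmorph_int (rmorph_nat _ 2); field.
Qed.

Lemma def_field_Qsqrt5_of n (A : 'I_n -> 'rV[C]_3) :
  (forall i k, in_Qsqrt5 (A i 0 k)) -> (exists i k, A i 0 k = phi) -> def_field_Qsqrt5 A.
Proof.
move=> hA [i [k hik]] z; split; first by move/(_ _ Qsqrt5_subfield hA).
case=> a [b ->] P hP hPA; have [h1 _ hM _] := hP.
have hs : P s5.
  have h2phi : P (2 * phi + 1).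
    apply: (subfield_add hP _ h1); apply: (hM); first exact: (subfield_add hP h1 h1).
    by rewrite -hik.
  by case: sqrt5_phi => ->; [|apply: (subfield_opp hP)].
by apply: (subfield_add hP); [|apply: (hM) => //]; exact: subfield_ratr.
Qed.

Lemma phi_real : phi \is Num.real.
Proof.
by case: phi_def => ->; rewrite rpredM ?rpredV ?rpredD ?rpredB ?rpredN ?real1 ?sqrt5_real ?realn.
Qed.

Lemma real_garr s : real_arr (garr phi s).
Proof.
by move=> i k; have [x ->] := garr_entry phi s i k; rewrite rpredD ?rpredM ?realz ?phi_real.
Qed.

Lemma def_field_garr s : (gline s 'L_7).1.2 = (0, 1) -> def_field_Qsqrt5 (garr phi s).
Proof.
move=> h7; apply: def_field_Qsqrt5_of => [i k|].
  by have [x ->] := garr_entry phi s i k; apply: gev_Qsqrt5.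
by exists 'L_7, i1; rewrite /garr /gevv mxE /= h7 /gev /= mul1r add0r.
Qed.

End Golden.

(** * Projective invariants of the arrangements *)

Section Forms.
Variable K : numFieldType.
Implicit Types phi t n d : K.

Definition formP phi n d := (phi + 2) * n + (phi + 1) * d.
Definition formQ phi n d :=
  ((phi + 2) * n + (phi + 3) * d) * ((1 - phi) * n - phi * d) * ((1 - phi) * n + (2 - phi) * d).

Lemma formP_scale phi c n d : formP phi (c * n) (c * d) = c * formP phi n d.
Proof. by rewrite /formP; ring. Qed.

Lemma formQ_scale phi c n d : formQ phi (c * n) (c * d) = c ^+ 3 * formQ phi n d.
Proof. by rewrite /formQ; ring. Qed.

Lemma golden_forms_cover phi t n d : phi ^+ 2 = 1 - phi -> t ^+ 2 = 1 - t ->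
  n ^+ 2 + 2 * d * n + (3 * t - 1) * d ^+ 2 = 0 -> formP phi n d = 0 \/ formQ phi n d = 0.
Proof.
move=> hphi ht hG; have hphi' : phi ^+ 2 + phi - 1 = 0 by rewrite hphi; ring.
case: (golden_roots hphi ht) => et.
- have : formP phi n d * ((phi + 2) * n + (phi + 3) * d) = 0.
    apply: (eq_by_multiple (k := 3 * phi + 5) hG); rewrite et subr0.
    by apply: (eq_by_multiple (k := n ^+ 2 + 2 * d * n - 8 * d ^+ 2) hphi'); rewrite /formP; ring.
  move/eqP; rewrite mulf_eq0 => /orP [/eqP ->|/eqP h]; first by left.
  by right; rewrite /formQ h !mul0r.
- right; have : ((1 - phi) * n - phi * d) * ((1 - phi) * n + (2 - phi) * d) = 0.
    apply: (eq_by_multiple (k := 2 - 3 * phi) hG); rewrite et subr0.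
    by apply: (eq_by_multiple (k := n ^+ 2 + 2 * d * n - 8 * d ^+ 2) hphi'); ring.
  by rewrite /formQ -mulrA => ->; rewrite mulr0.
Qed.

Lemma golden_forms_disjoint phi n d : 1 + 2 * phi != 0 -> d != 0 ->
  formP phi n d = 0 -> formQ phi n d != 0.
Proof.
move=> hphi hd hP.
have h2 : (2 : K) != 0 by rewrite pnatr_eq0.
have h3 : (3 : K) != 0 by rewrite pnatr_eq0.
rewrite /formQ !mulf_neq0 //.
- apply: contra_neq _ (mulf_neq0 h2 hd) => h.
  transitivity ((phi + 2) * n + (phi + 3) * d - formP phi n d); first by rewrite /formP; ring.
  by rewrite h hP subrr.
- apply: contra_neq _ (mulf_neq0 hphi hd) => h.
  transitivity ((1 - phi) * formP phi n d - (phi + 2) * ((1 - phi) * n - phi * d)).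
    by rewrite /formP; ring.
  by rewrite h hP !mulr0 subrr.
- apply: contra_neq _ (mulf_neq0 h3 hd) => h.
  transitivity ((phi + 2) * ((1 - phi) * n + (2 - phi) * d) - (1 - phi) * formP phi n d).
    by rewrite /formP; ring.
  by rewrite h hP !mulr0 subrr.
Qed.

End Forms.

Section Invariants.
Variable K : comNzRingType.
Implicit Types A : 'I_13 -> 'rV[K]_3.

(* For [A] in the frame of [in_frame] below, [invN A] and [invD A] are the
   second and first coordinates of [A 'L_11], up to a common nonzero factor. *)
Definition invN A := - (bracket (A 'L_11) (A 'L_1) (A 'L_2) *
  bracket (A 'L_4) (A 'L_1) (A 'L_3) * bracket (A 'L_5) (A 'L_2) (A 'L_4)).
Definition invD A := bracket (A 'L_11) (A 'L_4) (A 'L_1) *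
  bracket (A 'L_2) (A 'L_1) (A 'L_5) * bracket (A 'L_3) (A 'L_2) (A 'L_4).

Lemma bracket_proj u v w (g : 'M[K]_3) k1 k2 k3 :
  bracket (k1 *: (u *m g)) (k2 *: (v *m g)) (k3 *: (w *m g)) =
  k1 * k2 * k3 * rows_bracket g * bracket u v w.
Proof. by rewrite bracketZ bracketM; ring. Qed.

End Invariants.

Definition gN (s : seq gvec) : zphi :=
  gsub (0, 0) (gmul (gmul (gbracket (gline s 'L_11) (gline s 'L_1) (gline s 'L_2))
    (gbracket (gline s 'L_4) (gline s 'L_1) (gline s 'L_3)))
    (gbracket (gline s 'L_5) (gline s 'L_2) (gline s 'L_4))).
Definition gD (s : seq gvec) : zphi :=
  gmul (gmul (gbracket (gline s 'L_11) (gline s 'L_4) (gline s 'L_1))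
    (gbracket (gline s 'L_2) (gline s 'L_1) (gline s 'L_5)))
    (gbracket (gline s 'L_3) (gline s 'L_2) (gline s 'L_4)).
Definition gformP (n d : zphi) : zphi := gadd (gmul (2, 1) n) (gmul (1, 1) d).
Definition gformQ (n d : zphi) : zphi :=
  gmul (gmul (gadd (gmul (2, 1) n) (gmul (3, 1) d)) (gsub (gmul (1, -1) n) (gmul (0, 1) d)))
    (gadd (gmul (1, -1) n) (gmul (2, -1) d)).

Lemma gformP_gB1 : gformP (gN gB1) (gD gB1) == (0, 0). Proof. by vm_compute. Qed.
Lemma gformQ_gB2 : gformQ (gN gB2) (gD gB2) == (0, 0). Proof. by vm_compute. Qed.

Section InvariantsGolden.
Variable R : realType.
Local Notation C := R[i].
Variable phi : C.
Hypothesis phi_golden : phi ^+ 2 = 1 - phi.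
Implicit Types A B : 'I_13 -> 'rV[C]_3.

Lemma gev0 : gev phi (0, 0) = 0. Proof. by rewrite /gev mul0r addr0. Qed.

Lemma invN_garr s : invN (garr phi s) = gev phi (gN s).
Proof. by rewrite /invN /garr !bracket_gevv // /gN gevB gev0 sub0r !gevM. Qed.

Lemma invD_garr s : invD (garr phi s) = gev phi (gD s).
Proof. by rewrite /invD /garr !bracket_gevv // /gD !gevM. Qed.

Lemma formP_gev n d : formP phi (gev phi n) (gev phi d) = gev phi (gformP n d).
Proof. by rewrite /gformP gevD !gevM // /formP /gev /=; ring. Qed.

Lemma formQ_gev n d : formQ phi (gev phi n) (gev phi d) = gev phi (gformQ n d).
Proof. by rewrite /gformQ !(gevD, gevB, gevM) // /formQ /gev /=; ring. Qed.

Lemma formP_B1 : formP phi (invN (garr phi gB1)) (invD (garr phi gB1)) = 0.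
Proof. by rewrite invN_garr invD_garr formP_gev (eqP gformP_gB1) gev0. Qed.

Lemma formQ_B2 : formQ phi (invN (garr phi gB2)) (invD (garr phi gB2)) = 0.
Proof. by rewrite invN_garr invD_garr formQ_gev (eqP gformQ_gB2) gev0. Qed.

End InvariantsGolden.

(** * Realisations of the combinatorics of B1 *)

Lemma frame_elimination (K : fieldType) (t a b b12 c12 b13 c13 : K) :
  t ^+ 2 = 1 - t -> c12 != 0 -> c13 != 0 ->
  b * c12 - ((t - 1) * a - b) * b12 = 0 -> a * b13 - b * t * c13 = 0 ->
  (1 + 2 * t) * c12 * c13 + (1 + t) * c12 * b13 + t * b12 * c13 = 0 ->
  b ^+ 2 + 2 * a * b + (3 * t - 1) * a ^+ 2 = 0.
Proof.
move=> ht h12 h13 e1 e2 e3; apply: (mulfI (mulf_neq0 h12 h13)); rewrite mulr0.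
transitivity (c12 * c13 * (t ^+ 2 + t - 1) * (2 * a ^+ 2 + (t - 1) * a * b - b ^+ 2)
  - (a * ((t - 1) * a - b) * ((1 + 2 * t) * c12 * c13 + (1 + t) * c12 * b13 + t * b12 * c13)
     - (1 + t) * c12 * ((t - 1) * a - b) * (a * b13 - b * t * c13)
     + t * c13 * a * (b * c12 - ((t - 1) * a - b) * b12))); first by ring.
by rewrite ht e1 e2 e3; ring.
Qed.

Section GoldenArrangements.
Variable R : realType.
Local Notation C := R[i].
Variable phi : C.
Hypothesis phi_golden : phi ^+ 2 = 1 - phi.
Hypothesis phi_irrational : forall a b : int, a%:~R + b%:~R * phi = 0 -> a = 0 /\ b = 0.
Local Notation A1 := (garr phi gB1).
Local Notation A2 := (garr phi gB2).

Lemma gev_eq0 x : (gev phi x == 0) = (x == (0, 0)).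
Proof.
apply/eqP/eqP => [/phi_irrational [h1 h2]|->]; last by rewrite /gev mul0r addr0.
by case: x h1 h2 => /= ? ? -> ->.
Qed.

Lemma gevv_eq0 u : (gevv phi u == 0) = (u == gzero).
Proof.
case: u => [[x y] z]; rewrite vec3_eq0 !c0_vec3 !c1_vec3 !c2_vec3 !gev_eq0.
by rewrite /gzero !xpair_eqE andbA.
Qed.

Lemma bracket_garr s (i j l : 'I_13) :
  (bracket (garr phi s i) (garr phi s j) (garr phi s l) == 0) = gconcurrent s i j l.
Proof. by rewrite bracket_gevv // gev_eq0. Qed.

Lemma distinct_lines_garr s : gdistinct_lines s -> distinct_lines (garr phi s).
Proof.
move=> /allP hs i j hij; rewrite /garr cross_gevv // gevv_eq0.
have /allP /(_ j) := hs i (ord13_in_iota i).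
by rewrite ord13_in_iota (negbTE (hij : (i : nat) != j)) => /(_ isT).
Qed.

Lemma is_arr_garr s : gdistinct_lines s -> is_arr (garr phi s).
Proof. by move=> hs; apply/distinct_lines_is_arr/distinct_lines_garr. Qed.

Lemma same_comb_B12 : same_comb A1 A2.
Proof.
apply: same_comb_brackets.
- exact/distinct_lines_garr/gdistinct_lines_gB1.
- exact/distinct_lines_garr/gdistinct_lines_gB2.
move=> i j l; rewrite (bracket_garr gB1) (bracket_garr gB2).
have /allP /(_ _ (ord13_in_iota i)) /allP /(_ _ (ord13_in_iota j)) /allP := same_concurrences_gB12.
by move=> /(_ _ (ord13_in_iota l)) /eqP.
Qed.

Lemma realization_bracket B (i j l : 'I_13) : realization A1 B -> i != j ->
  gconcurrent gB1 i j l -> bracket (B i) (B j) (B l) = 0.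
Proof.
move=> hB hij hl; apply/concurrent_bracket/(same_comb_concurrent hB.2 hij).
apply: bracket_concurrent => //; first exact/distinct_lines_garr/gdistinct_lines_gB1.
by apply/eqP; rewrite bracket_garr.
Qed.

Lemma realization_bracket_neq0 B (i j l : 'I_13) : realization A1 B ->
  ~~ gconcurrent gB1 i j l -> bracket (B i) (B j) (B l) != 0.
Proof.
move=> hB hA; have hij : i != j.
  apply: contraNneq hA => ->; rewrite -bracket_garr /bracket.
  by rewrite -[X in cross _ X]scale1r cross_scaler -(scale0r 0) dotZr mul0r.
apply/eqP => /(bracket_concurrent (fun i j => is_arr_cross hB.1) hij).
move=> /(same_comb_concurrent (fun S => iff_sym (hB.2 S)) hij) /concurrent_bracket /eqP.
by rewrite bracket_garr; apply/negP.
Qed.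

Definition in_frame (B : 'I_13 -> 'rV[C]_3) :=
  [/\ same_line (vec3 0 0 1) (B 'L_1), same_line (vec3 1 0 0) (B 'L_2),
      same_line (vec3 1 0 (-1)) (B 'L_3), same_line (vec3 0 1 0) (B 'L_4) &
      same_line (vec3 0 1 (-1)) (B 'L_5)].

Lemma realization_not_multiple B (i j : 'I_13) k : realization A1 B -> i != j ->
  B j <> k *: B i.
Proof. by move=> hB hij hk; move: (is_arr_cross hB.1 hij); rewrite hk cross_scaler eqxx. Qed.

Lemma coordinate_line3 B : realization A1 B -> B 'L_1 = vec3 0 0 1 -> B 'L_2 = vec3 1 0 0 ->
  exists a c, [/\ a != 0, c != 0 & B 'L_3 = vec3 a 0 c].
Proof.
move=> hB h1 h2; exists (c0 (B 'L_3)), (c2 (B 'L_3)).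
have hb : c1 (B 'L_3) = 0.
  have := realization_bracket (i := 'L_1) (j := 'L_2) (l := 'L_3) hB isT isT.
  by rewrite h1 h2 (vec3E (B 'L_3)) bracket_vec3 c1_vec3 => <-; ring.
have h3 : B 'L_3 = vec3 (c0 (B 'L_3)) 0 (c2 (B 'L_3)) by rewrite -hb -vec3E.
split => //; apply/eqP => h.
  by apply: (realization_not_multiple (k := c2 (B 'L_3)) hB (isT : 'L_1 != 'L_3));
    rewrite h1 [LHS]h3 h scale_vec3; congr (vec3 _ _ _); ring.
by apply: (realization_not_multiple (k := c0 (B 'L_3)) hB (isT : 'L_2 != 'L_3));
  rewrite h2 [LHS]h3 h scale_vec3; congr (vec3 _ _ _); ring.
Qed.

Lemma coordinate_line5 B : realization A1 B -> B 'L_1 = vec3 0 0 1 -> B 'L_4 = vec3 0 1 0 ->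
  exists b d, [/\ b != 0, d != 0 & B 'L_5 = vec3 0 b d].
Proof.
move=> hB h1 h4; exists (c1 (B 'L_5)), (c2 (B 'L_5)).
have ha : c0 (B 'L_5) = 0.
  have := realization_bracket (i := 'L_1) (j := 'L_4) (l := 'L_5) hB isT isT.
  rewrite h1 h4 (vec3E (B 'L_5)) bracket_vec3 c0_vec3 => e.
  by apply: (eq_by_multiple (k := -1) e); ring.
have h5 : B 'L_5 = vec3 0 (c1 (B 'L_5)) (c2 (B 'L_5)) by rewrite -ha -vec3E.
split => //; apply/eqP => h.
  by apply: (realization_not_multiple (k := c2 (B 'L_5)) hB (isT : 'L_1 != 'L_5));
    rewrite h1 [LHS]h5 h scale_vec3; congr (vec3 _ _ _); ring.
by apply: (realization_not_multiple (k := c1 (B 'L_5)) hB (isT : 'L_4 != 'L_5));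
  rewrite h4 [LHS]h5 h scale_vec3; congr (vec3 _ _ _); ring.
Qed.

Lemma realization_frame B : realization A1 B ->
  exists2 g, g \in unitmx & in_frame (fun i => B i *m g).
Proof.
move=> hB.
have [g1 hg1 [h2 h4 h1]] := coordinate_frame
  (realization_bracket_neq0 (i := 'L_2) (j := 'L_4) (l := 'L_1) hB isT).
have hB1 := realization_proj_equiv hB (proj_equiv_mulmx _ hg1).
have [a [c [ha hc h3]]] := coordinate_line3 hB1 h1 h2.
have [b [d [hb hd h5]]] := coordinate_line5 hB1 h1 h4.
have [g2 hg2 [e2 e4 e1 e3 e5]] := diagonal_frame ha hb hc hd.
exists (g1 *m g2); first by rewrite unitmx_mul hg1.
rewrite /in_frame !mulmxA h1 h2 h3 h4 h5 e1 e2 e3 e4 e5.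
split; [exists 1; rewrite scale1r oner_neq0 | exists (- c / a) | exists (- c) |
        exists (- d / b) | exists (- d)]; by rewrite ?mulf_neq0 ?oppr_eq0 ?invr_eq0.
Qed.

Section Frame.
Variable B : 'I_13 -> 'rV[C]_3.
Hypothesis B_real : realization A1 B.
Hypothesis B_frame : in_frame B.

Let concur (i j l : 'I_13) : i != j -> gconcurrent gB1 i j l -> bracket (B i) (B j) (B l) = 0 :=
  @realization_bracket B i j l B_real.
Arguments concur : clear implicits.

Let line_neq0 (i : 'I_13) : B i != 0 := B_real.1.1 i.

Lemma frame_cross_neq0 (i j : 'I_13) d : i != j -> same_line d (B i) -> cross d (B j) != 0.
Proof.
move=> hij [k [hk hi]]; move: (is_arr_cross B_real.1 hij).
by rewrite hi crossZl scaler_eq0 negb_or => /andP [].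
Qed.

Ltac solve_vec3_neq0 := by rewrite vec3_eq0 !c0_vec3 !c1_vec3 !c2_vec3 oner_eq0 ?andbF.

Ltac meet_direction k := exists k; split;
  [by rewrite ?oppr_eq0 oner_neq0 | rewrite !cross_vec3 scale_vec3; congr vec3; ring].

Lemma frame_line6 : same_line (vec3 1 (-1) 0) (B 'L_6).
Proof.
have [_ f2 f3 f4 f5] := B_frame.
apply: (same_line_meet f2 f4 f3 f5 (concur 'L_2 'L_4 'L_6 isT isT) (concur 'L_3 'L_5 'L_6 isT isT));
  [exact: line_neq0 | solve_vec3_neq0 | meet_direction (-1 : C)].
Qed.

Lemma frame_line7 : exists t, same_line (vec3 1 t (-1)) (B 'L_7).
Proof.
have [_ _ f3 f4 _] := B_frame.
have := bracket_eq0_same_line f3 f4 (same_line_refl _) (concur 'L_3 'L_4 'L_7 isT isT).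
rewrite (vec3E (B 'L_7)) bracket_vec3 => e.
have hc : c2 (B 'L_7) = - c0 (B 'L_7) by apply/subr0_eq; rewrite -e; ring.
have ha : c0 (B 'L_7) != 0.
  apply: contraNneq (frame_cross_neq0 (isT : 'L_4 != 'L_7) f4) => a0.
  by rewrite (vec3E (B 'L_7)) hc a0 cross_vec3 -vec3_0; apply/eqP; congr vec3; ring.
exists (c1 (B 'L_7) / c0 (B 'L_7)), (c0 (B 'L_7)); split => //.
by apply: vec3P; rewrite ?c0Z ?c1Z ?c2Z ?c0_vec3 ?c1_vec3 ?c2_vec3 ?hc; field.
Qed.

Section FrameParameter.
Variable t : C.
Hypothesis frame7 : same_line (vec3 1 t (-1)) (B 'L_7).

Lemma frame_line8 : same_line (vec3 t (- t) 1) (B 'L_8).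
Proof.
have [f1 f2 _ _ _] := B_frame.
apply: (same_line_meet f1 frame_line6 f2 frame7 (concur 'L_1 'L_6 'L_8 isT isT)
  (concur 'L_2 'L_7 'L_8 isT isT)); [exact: line_neq0 | solve_vec3_neq0 | meet_direction (1 : C)].
Qed.

Lemma frame_line9 : same_line (vec3 1 t 0) (B 'L_9).
Proof.
have [f1 f2 _ f4 _] := B_frame.
apply: (same_line_meet f2 f4 f1 frame7 (concur 'L_2 'L_4 'L_9 isT isT)
  (concur 'L_1 'L_7 'L_9 isT isT)); [exact: line_neq0 | solve_vec3_neq0 | meet_direction (-1 : C)].
Qed.

Lemma frame_line10 : same_line (vec3 (- (t + 1)) 0 1) (B 'L_10).
Proof.
have [f1 f2 _ _ _] := B_frame.
apply: (same_line_meet f1 f2 frame_line6 frame7 (concur 'L_1 'L_2 'L_10 isT isT)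
  (concur 'L_6 'L_7 'L_10 isT isT)); [exact: line_neq0 | solve_vec3_neq0 | meet_direction (-1 : C)].
Qed.

Lemma frame_golden : t ^+ 2 = 1 - t.
Proof.
have [_ _ _ _ f5] := B_frame.
have := bracket_eq0_same_line f5 frame_line8 frame_line9 (concur 'L_5 'L_8 'L_9 isT isT).
by rewrite bracket_vec3 => e; apply: (eq_by_multiple (k := -1) e); ring.
Qed.

Lemma frame_line11 : c2 (B 'L_11) = (t - 1) * c0 (B 'L_11) - c1 (B 'L_11).
Proof.
have [_ _ _ _ f5] := B_frame.
have := bracket_eq0_same_line f5 frame7 (same_line_refl _) (concur 'L_5 'L_7 'L_11 isT isT).
rewrite (vec3E (B 'L_11)) bracket_vec3 !c0_vec3 !c1_vec3 !c2_vec3 => e.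
by apply: (eq_by_multiple (k := -1) e); ring.
Qed.

Lemma frame_line12 : exists b c, c != 0 /\ B 'L_12 = vec3 (- (t + 1) * c) b c.
Proof.
have [_ _ _ f4 _] := B_frame.
have := bracket_eq0_same_line f4 frame_line10 (same_line_refl _) (concur 'L_4 'L_10 'L_12 isT isT).
rewrite (vec3E (B 'L_12)) bracket_vec3 => e.
have ha : c0 (B 'L_12) = - (t + 1) * c2 (B 'L_12) by apply: (eq_by_multiple (k := 1) e); ring.
exists (c1 (B 'L_12)), (c2 (B 'L_12)).
split; last by apply: vec3P; rewrite ?c0_vec3 ?c1_vec3 ?c2_vec3.
apply: contraNneq (frame_cross_neq0 (isT : 'L_4 != 'L_12) f4) => c0.
by rewrite (vec3E (B 'L_12)) ha c0 cross_vec3 -vec3_0; apply/eqP; congr vec3; ring.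
Qed.

Lemma frame_line13 : exists b c, c != 0 /\ B 'L_13 = vec3 (t * c) b c.
Proof.
have [_ _ _ f4 _] := B_frame.
have := bracket_eq0_same_line f4 frame_line8 (same_line_refl _) (concur 'L_4 'L_8 'L_13 isT isT).
rewrite (vec3E (B 'L_13)) bracket_vec3 => e.
have ha : c0 (B 'L_13) = t * c2 (B 'L_13) by apply: (eq_by_multiple (k := 1) e); ring.
exists (c1 (B 'L_13)), (c2 (B 'L_13)).
split; last by apply: vec3P; rewrite ?c0_vec3 ?c1_vec3 ?c2_vec3.
apply: contraNneq (frame_cross_neq0 (isT : 'L_4 != 'L_13) f4) => c0.
by rewrite (vec3E (B 'L_13)) ha c0 cross_vec3 -vec3_0; apply/eqP; congr vec3; ring.
Qed.

Local Notation a := (c0 (B 'L_11)).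
Local Notation b := (c1 (B 'L_11)).

Lemma frame_relation : a != 0 /\ b ^+ 2 + 2 * a * b + (3 * t - 1) * a ^+ 2 = 0.
Proof.
have [f1 f2 _ _ f5] := B_frame.
have [b12 [c12 [h12 e12]]] := frame_line12.
have [b13 [c13 [h13 e13]]] := frame_line13.
have e11 := frame_line11.
have E1 : b * c12 - ((t - 1) * a - b) * b12 = 0.
  have := bracket_eq0_same_line f2 (same_line_refl _) (same_line_refl _)
    (concur 'L_2 'L_11 'L_12 isT isT).
  by rewrite e12 (vec3E (B 'L_11)) e11 bracket_vec3 !c0_vec3 !c1_vec3 => <-; ring.
have E2 : a * b13 - b * t * c13 = 0.
  have := bracket_eq0_same_line f1 (same_line_refl _) (same_line_refl _)
    (concur 'L_1 'L_11 'L_13 isT isT).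
  by rewrite e13 (vec3E (B 'L_11)) e11 bracket_vec3 !c0_vec3 !c1_vec3 => <-; ring.
have E3 : (1 + 2 * t) * c12 * c13 + (1 + t) * c12 * b13 + t * b12 * c13 = 0.
  have := bracket_eq0_same_line f5 (same_line_refl _) (same_line_refl _)
    (concur 'L_5 'L_12 'L_13 isT isT).
  by rewrite e12 e13 bracket_vec3 => <-; ring.
split; last exact: frame_elimination frame_golden h12 h13 E1 E2 E3.
apply/eqP => a0; apply: (negP (line_neq0 'L_11)); apply/eqP.
have t0 : t != 0.
  by apply/eqP => t0; move: frame_golden; rewrite t0 expr0n subr0 => /eqP; rewrite eq_sym oner_eq0.
have b0 : b = 0.
  apply/eqP; move/eqP: E2; rewrite a0 mul0r sub0r oppr_eq0 !mulf_eq0.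
  by rewrite (negbTE t0) (negbTE h13) !orbF.
by rewrite (vec3E (B 'L_11)) e11 a0 b0 -vec3_0; congr vec3; ring.
Qed.

End FrameParameter.
End Frame.

Implicit Types A B : 'I_13 -> 'rV[C]_3.

Definition invP A := formP phi (invN A) (invD A).
Definition invQ A := formQ phi (invN A) (invD A).

Lemma invND_proj_equiv A B : proj_equiv A B ->
  exists2 c, c != 0 & invN B = c * invN A /\ invD B = c * invD A.
Proof.
case=> g [hg hAB]; rewrite /invN /invD.
have [k1 [h1 ->]] := hAB 'L_1; have [k2 [h2 ->]] := hAB 'L_2.
have [k3 [h3 ->]] := hAB 'L_3; have [k4 [h4 ->]] := hAB 'L_4.
have [k5 [h5 ->]] := hAB 'L_5; have [k11 [h11 ->]] := hAB 'L_11.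
exists (k11 * k1 ^+ 2 * k2 ^+ 2 * k4 ^+ 2 * k3 * k5 * rows_bracket g ^+ 3).
  by rewrite !mulf_neq0 ?expf_neq0 ?rows_bracket_neq0.
by rewrite !bracket_proj; split; ring.
Qed.

Lemma invPQ_proj_equiv A B : proj_equiv A B ->
  (invP A = 0 <-> invP B = 0) /\ (invQ A = 0 <-> invQ B = 0).
Proof.
case/invND_proj_equiv => c hc [hN hD]; rewrite /invP /invQ hN hD formP_scale formQ_scale.
have hc3 : c ^+ 3 != 0 by rewrite expf_neq0.
by split; split => [->|/eqP]; rewrite ?mulr0 // mulf_eq0 ?(negbTE hc) ?(negbTE hc3) => /eqP.
Qed.

Lemma frame_invND B : in_frame B -> exists2 c, c != 0 &
  invN B = c * c1 (B 'L_11) /\ invD B = c * c0 (B 'L_11).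
Proof.
rewrite /invN /invD; case=> -[k1 [h1 ->]] [k2 [h2 ->]] [k3 [h3 ->]] [k4 [h4 ->]] [k5 [h5 ->]].
exists (k1 ^+ 2 * k2 ^+ 2 * k4 ^+ 2 * k3 * k5); first by rewrite !mulf_neq0 ?expf_neq0.
rewrite (vec3E (B 'L_11)) -[vec3 (c0 _) _ _]scale1r !bracketZ !bracket_vec3.
by rewrite !c0Z !c1Z !c0_vec3 !c1_vec3; split; ring.
Qed.

Lemma one_add_2phi_neq0 : 1 + 2 * phi != 0.
Proof.
apply/eqP => h; have [] := @phi_irrational 1 2; last by [].
by rewrite -[RHS]h; congr (_ + _ * _).
Qed.

Lemma realization_dichotomy A : realization A1 A ->
  (invP A = 0 \/ invQ A = 0) /\ (invP A = 0 -> invQ A != 0).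
Proof.
move=> hA; have [g hg hF] := realization_frame hA.
have [[hP1 hP2] [hQ1 hQ2]] := invPQ_proj_equiv (proj_equiv_mulmx A hg).
have hB := realization_proj_equiv hA (proj_equiv_mulmx A hg).
have [t h7] := frame_line7 hB hF.
have [a0 hrel] := frame_relation hB hF h7.
have [c hc [hN hD]] := frame_invND hF.
rewrite /invP /invQ hN hD formP_scale formQ_scale in hP1 hP2 hQ1 hQ2.
split.
  have [hP|hQ] := golden_forms_cover phi_golden (frame_golden hB hF h7) hrel.
    by left; apply: hP2; rewrite hP mulr0.
  by right; apply: hQ2; rewrite hQ mulr0.
move=> /hP1 /eqP; rewrite mulf_eq0 (negbTE hc) /= => /eqP hP.
apply/eqP => /hQ1 /eqP; rewrite mulf_eq0 expf_eq0 (negbTE hc) andbF /=; apply/negP.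
exact: golden_forms_disjoint one_add_2phi_neq0 a0 hP.
Qed.

End GoldenArrangements.

(** * Continuity and separation *)

Section Continuity.
Variable R : realType.
Local Notation C := R[i].
Variables (I : Type) (m : nat).
Local Notation Arr := (I -> 'rV[C]_m).
Implicit Types F G : Arr -> C.

Lemma normcE (z : C) : `|z| = ((normc z)%:C)%C. Proof. by case: z. Qed.

Lemma normc_ge0 (z : C) : 0 <= normc z.
Proof. by rewrite -lecR -normcE normr_ge0. Qed.

(* Continuity for the sup norm on the entries, as in [rel_open]. *)
Definition continuous_entries F := forall (A : Arr) (e : R), 0 < e ->
  exists2 d : R, 0 < d & forall B : Arr,
    (forall i k, normc (B i 0 k - A i 0 k) < d) -> normc (F B - F A) < e.

Lemma entries_lt_min (A B : Arr) d1 d2 :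
  (forall i k, normc (B i 0 k - A i 0 k) < Num.min d1 d2) ->
  (forall i k, normc (B i 0 k - A i 0 k) < d1) /\ (forall i k, normc (B i 0 k - A i 0 k) < d2).
Proof. by move=> h; split=> i k; move: (h i k); rewrite lt_min => /andP []. Qed.

Lemma continuous_ext F G : (forall A, F A = G A) -> continuous_entries F -> continuous_entries G.
Proof.
move=> hFG hF A e he; have [d hd hB] := hF A e he.
by exists d => // B hBA; rewrite -!hFG; apply: hB.
Qed.

Lemma continuous_const (c : C) : continuous_entries (fun _ => c).
Proof. by move=> A e he; exists 1 => // B _; rewrite subrr normc0. Qed.

Lemma continuous_entry i k : continuous_entries (fun A => A i 0 k).
Proof. by move=> A e he; exists e. Qed.

Lemma continuous_opp F : continuous_entries F -> continuous_entries (fun A => - F A).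
Proof.
move=> hF A e he; have [d hd hB] := hF A e he; exists d => // B hBA.
by rewrite -opprD normcN; apply: hB.
Qed.

Lemma continuous_add F G : continuous_entries F -> continuous_entries G ->
  continuous_entries (fun A => F A + G A).
Proof.
move=> hF hG A e he.
have he2 : 0 < e / 2 by lra.
have [d1 hd1 hB1] := hF A _ he2; have [d2 hd2 hB2] := hG A _ he2.
exists (Num.min d1 d2) => [|B /entries_lt_min [/hB1 h1 /hB2 h2]]; first by rewrite lt_min hd1 hd2.
have := le_normcD (F B - F A) (G B - G A).
rewrite (_ : F B - F A + (G B - G A) = F B + G B - (F A + G A)); [lra | ring].
Qed.

Lemma continuous_mul F G : continuous_entries F -> continuous_entries G ->
  continuous_entries (fun A => F A * G A).
Proof.
move=> hF hG A e he.
set a := normc (F A); set b := normc (G A).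
have ha : 0 <= a := normc_ge0 _; have hb : 0 <= b := normc_ge0 _.
pose eta := Num.min 1 (e / (2 * (1 + a + b))).
have hM : 0 < 2 * (1 + a + b) by lra.
have heta : 0 < eta by rewrite lt_min ltr01 divr_gt0.
have heta1 : eta <= 1 by rewrite ge_min lexx.
have heta2 : eta * (2 * (1 + a + b)) <= e.
  have : eta <= e / (2 * (1 + a + b)) by rewrite ge_min lexx orbT.
  by rewrite -(ler_pM2r hM) mulfVK // gt_eqF.
have [d1 hd1 hB1] := hF A _ heta; have [d2 hd2 hB2] := hG A _ heta.
exists (Num.min d1 d2) => [|B /entries_lt_min [/hB1 h1 /hB2 h2]]; first by rewrite lt_min hd1 hd2.
set x := normc (F B - F A) in h1; set y := normc (G B - G A) in h2.
have hx : 0 <= x := normc_ge0 _; have hy : 0 <= y := normc_ge0 _.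
have hn : normc (F B * G B - F A * G A) <= x * y + a * y + b * x.
  rewrite (_ : F B * G B - F A * G A =
    (F B - F A) * (G B - G A) + F A * (G B - G A) + G A * (F B - F A)); last by ring.
  rewrite -!normcM -/x -/y -/a -/b; apply: (le_trans (le_normcD _ _)).
  by rewrite lerD2r; apply: le_normcD.
have hxy : x * y <= eta * y by rewrite ler_wpM2r // ltW.
have hy' : y * (1 + a + b) <= eta * (1 + a + b) by rewrite ler_wpM2r ?ltW //; lra.
have hx' : b * x <= b * eta by rewrite ler_wpM2l // ltW.
nra.
Qed.

End Continuity.

Ltac continuity :=
  lazymatch goal with
  | |- continuous_entries (fun A => @?f A + @?g A) =>
      apply: (continuous_add (F := f) (G := g)); continuity
  | |- continuous_entries (fun A => - @?f A) => apply: (continuous_opp (F := f)); continuity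
  | |- continuous_entries (fun A => @?f A * @?g A) =>
      apply: (continuous_mul (F := f) (G := g)); continuity
  | |- continuous_entries (fun A => bracket (@?u A) (@?v A) (@?w A)) =>
      let e := eval cbv beta in (fun A => esym (bracketE (u A) (v A) (w A))) in
      apply: (continuous_ext e); rewrite /c0 /c1 /c2; continuity
  | |- continuous_entries (fun A => fun_of_matrix _ _ _) => apply: continuous_entry
  | |- _ => apply: continuous_const
  end.

Section Separation.
Variable R : realType.
Local Notation C := R[i].
Variable n : nat.
Local Notation Arr := ('I_n -> 'rV[C]_3).
Implicit Types (X : Arr -> Prop) (F G : Arr -> C).

Lemma rel_open_zero_set X F G : continuous_entries G ->
  (forall A, X A -> F A = 0 \/ G A = 0) -> (forall A, X A -> F A = 0 -> G A <> 0) ->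
  rel_open X (fun A => X A /\ F A = 0).
Proof.
move=> hG hcover hdisj; split => [A []//|A [hXA hFA]].
have hGA : 0 < normc (G A).
  by rewrite lt_def normc_ge0 andbT; apply/eqP => /eq0_normc; apply: hdisj.
have [d hd hB] := hG A _ hGA; exists (d%:C)%C; split; first by rewrite ltcR.
move=> B hXB hBA; split => //.
have /hB hlt : forall i k, normc (B i 0 k - A i 0 k) < d.
  by move=> i k; move: (hBA i k); rewrite normcE ltcR.
have : G B <> 0 by move=> hGB; move: hlt; rewrite hGB sub0r normcN ltxx.
by case: (hcover B hXB).
Qed.

Lemma saturated_zero_set X F : (forall A B, proj_equiv A B -> F A = 0 -> F B = 0) ->
  saturated X (fun A => X A /\ F A = 0).
Proof. by move=> hF A B _ hXB hAB [_ hFA]; split => //; apply: hF hAB hFA. Qed.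

Lemma zero_sets_separate X F G A1 A2 : continuous_entries F -> continuous_entries G ->
  (forall A, X A -> F A = 0 \/ G A = 0) -> (forall A, X A -> F A = 0 -> G A <> 0) ->
  (forall A B, proj_equiv A B -> (F A = 0 -> F B = 0) /\ (G A = 0 -> G B = 0)) ->
  X A1 -> F A1 = 0 -> X A2 -> G A2 = 0 -> ~ same_component X A1 A2.
Proof.
move=> hF hG hcover hdisj hinv hX1 hF1 hX2 hG2 [S [hSX hsat hconn hS1 hS2]]; apply: hconn.
exists (fun A => X A /\ F A = 0), (fun A => X A /\ G A = 0); split.
- split; first exact: rel_open_zero_set hG hcover hdisj.
  by apply: saturated_zero_set => A B /hinv [].
- split; last by apply: saturated_zero_set => A B /hinv [].
  apply: (rel_open_zero_set hF) => [A /hcover [] | A hA hGA hFA]; [by right | by left |].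
  exact: hdisj hA hFA hGA.
- by move=> A /hSX hA; case: (hcover A hA) => h; [left | right].
- by move=> A /hSX hA [_ hFA] [_ hGA]; apply: hdisj hA hFA hGA.
- by split; [exists A1 | exists A2].
Qed.

End Separation.

Section Pair.
Variable R : realType.
Local Notation C := R[i].
Variable phi : C.
Hypothesis phi_golden : phi ^+ 2 = 1 - phi.
Hypothesis phi_irrational : forall a b : int, a%:~R + b%:~R * phi = 0 -> a = 0 /\ b = 0.
Local Notation A1 := (garr phi gB1).
Local Notation A2 := (garr phi gB2).

Lemma continuous_invP : continuous_entries (invP phi).
Proof. by rewrite /invP /formP /invN /invD; continuity. Qed.

Lemma continuous_invQ : continuous_entries (invQ phi).
Proof. by rewrite /invQ /formQ /invN /invD; continuity. Qed.

Lemma not_same_component_B12 : ~ same_component (realization A1) A1 A2.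
Proof.
have hX1 : realization A1 A1 by split; [exact/is_arr_garr/gdistinct_lines_gB1 | ].
have hX2 : realization A1 A2.
  by split; [exact/is_arr_garr/gdistinct_lines_gB2 | exact: same_comb_B12].
have dich A := @realization_dichotomy R phi phi_golden phi_irrational A.
have hcover A : realization A1 A -> invP phi A = 0 \/ invQ phi A = 0 by case/dich.
have hdisj A : realization A1 A -> invP phi A = 0 -> invQ phi A <> 0.
  by case/dich => _ h /h /eqP.
have hinv A B : proj_equiv A B ->
    (invP phi A = 0 -> invP phi B = 0) /\ (invQ phi A = 0 -> invQ phi B = 0).
  by move=> /(invPQ_proj_equiv phi) [[hP _] [hQ _]].
exact: (zero_sets_separate continuous_invP continuous_invQ hcover hdisj hinv hX1
  (formP_B1 phi_golden) hX2 (formQ_B2 phi_golden)).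
Qed.

Lemma line_outside s t : has_line_outside s t ->
  exists i : 'I_13, forall j : 'I_13, ~ same_line (garr phi s i) (garr phi t j).
Proof.
case/hasP => i; rewrite mem_iota => /andP [_ hi] /allP hall; exists (Ordinal hi) => j [k [_ hk]].
move/negP: (hall j (ord13_in_iota j)); apply.
rewrite -(gevv_eq0 phi_irrational) -(cross_gevv phi_golden).
by change (cross (garr phi s (Ordinal hi)) (garr phi t j) == 0); rewrite hk cross_scaler.
Qed.

Lemma arithmetic_garr s A : (gline s 'L_7).1.2 = (0, 1) -> arithmetic (garr phi s) A ->
  exists psi, (psi = phi \/ psi = - 1 - phi) /\
    forall i, exists j, same_line (garr psi s i) (A j).
Proof.
move=> h7 [F [iota [sigma [A1' [A2' [_ hA1 _ [hsame _]]]]]]].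
pose q := A1' 'L_7 0 i1.
have hq : iota q = phi.
  have := congr1 (fun M : 'rV[C]_3 => M 0 i1) (hA1 'L_7); rewrite mxE => ->.
  by rewrite /garr /gevv mxE /= h7 /gev /= mul1r add0r.
have hA i : A1' i = garr q s i by apply: (@map_mx_inj _ _ iota); rewrite hA1 /garr gevv_rmorph hq.
have hq2 : q ^+ 2 = 1 - q.
  by apply: (fmorph_inj iota); rewrite rmorphXn rmorphB rmorph1 hq.
exists (iota (sigma q)); split.
  by apply: golden_roots phi_golden _; rewrite -!rmorphXn hq2 !rmorphB !rmorph1.
move=> i; have [j hj] := hsame i; exists j.
by rewrite /garr -!gevv_rmorph -map_mx_comp -[gevv q _]/(garr q s i) -hA.
Qed.

Lemma not_arithmetic_B12 : ~ arithmetic A1 A2.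
Proof.
case/(arithmetic_garr (erefl : (gline gB1 'L_7).1.2 = (0, 1))) => psi [hpsi hsame].
have [i hi] : exists i : 'I_13, forall j, ~ same_line (garr psi gB1 i) (A2 j).
  case: hpsi => ->; first exact: line_outside has_line_outside_gB1.
  have [i hi] := line_outside has_line_outside_conj_gB1.
  by exists i => j; rewrite garr_conj //; apply: hi.
by have [j] := hsame i; apply: hi.
Qed.

End Pair.

Unset Implicit Arguments.

Theorem theorem3p3 (R : realType) (phi : R[i]) :
  phi = (-1 + sqrt5 R) / 2 \/ phi = (-1 - sqrt5 R) / 2 ->
  [/\ real_arr (B1 phi), real_arr (B2 phi),
      def_field_Qsqrt5 (B1 phi), def_field_Qsqrt5 (B2 phi) &
      nonarithmetic_pair (B1 phi) (B2 phi)].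
Proof.
move=> hp; have hphi := sqrt5_phi_golden hp; have hirr := sqrt5_phi_irrational hp.
rewrite B1E B2E; split.
- exact: (real_garr hp).
- exact: (real_garr hp).
- by apply: (def_field_garr hp).
- by apply: (def_field_garr hp).
split; last exact: (not_arithmetic_B12 hphi hirr).
split.
- exact: (is_arr_garr hphi hirr gdistinct_lines_gB1).
- exact: (is_arr_garr hphi hirr gdistinct_lines_gB2).
- exact: (same_comb_B12 hphi hirr).
- exact: (not_same_component_B12 hphi hirr).
Qed.
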